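(* Let $N>2$ be an odd positive integer, $K$ a positive integer, and $0<Z_x\le N$, $0<Z_y\le K$ integers. Let $f:\mathbb{Z}_N\to\mathbb{Z}_K$ be such that for all integers $a,b$ with $-Z_x<a<Z_x$, $a\ne0$, $-Z_y<b<Z_y$, the equation $f(x+a)-f(x)=b$ (with $x+a$ computed in $\mathbb{Z}_N$ and the equation in $\mathbb{Z}_K$) has at most one solution $x\in\mathbb{Z}_N$. For $0\le k<N$ let $\mathbf{a}_k=(a_k(0),\dots,a_k(K-1))$ with $a_k(t)=\omega_K^{tf(k)}$. Let $\mathbf{h}_0,\dots,\mathbf{h}_{N-1}$ be unimodular complex sequences of length $N$ such that for all $0\le i\ne j<N$ and all $0\le v<N$, $$\Big|\sum_{n=0}^{N-1}h_i(n)h_j^*(n)\Big|\le 1,\qquad \Big|\sum_{n=0}^{N-1}h_i(n)h_j^*(n)\omega_N^{nv}\Big|<N.$$ For $0\le i<N$ define $\mathbf{s}_i$ of length $NK$ by $s_i(tN+k)=h_i(k)a_k(t)$ for $0\le t<K$, $0\le k<N$, and let $\mathcal{S}=\{\mathbf{s}_0,\dots,\mathbf{s}_{N-1}\}$. Then $\mathcal{S}$ is a polyphase periodic $(N,NK,\Pi,K)$-LAZ sequence set with $\Pi=(-Z_x,Z_x)\times(-Z_y,Z_y)$; that is, for all integers $(\tau,v)\in\Pi$: $|AF_{\mathbf{s}_i}(\tau,v)|\le K$ for every $i$ whenever $(\tau,v)\neq(0,0)$, and $|AF_{\mathbf{s}_i,\mathbf{s}_j}(\tau,v)|\le K$ for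 all $i\neq j$.
   Context: $\omega_L=e^{2\pi\sqrt{-1}/L}$, $z^*$ is complex conjugation, and a sequence is unimodular if all entries have modulus 1. For sequences $\mathbf{a},\mathbf{b}$ of length $L$, the periodic cross-ambiguity function is $AF_{\mathbf{a},\mathbf{b}}(\tau,v)=\sum_{t=0}^{L-1}a(t)b^*(\langle t+\tau\rangle_L)\omega_L^{vt}$ ($\langle\cdot\rangle_L$ = reduction mod $L$), and $AF_{\mathbf{a}}=AF_{\mathbf{a},\mathbf{a}}$. A set of $M$ sequences of length $L$ is an $(M,L,\Pi,\theta)$-LAZ periodic sequence set if the maximum of $|AF_{\mathbf{a}}(\tau,v)|$ over sequences $\mathbf{a}$ in the set and $(0,0)\ne(\tau,v)\in\Pi$, and of $|AF_{\mathbf{a},\mathbf{b}}(\tau,v)|$ over distinct $\mathbf{a},\mathbf{b}$ in the set and $(\tau,v)\in\Pi$, is $\theta$ (here: at most $\theta$). *)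

From HB Require Import structures.
From mathcomp Require Import all_boot all_order all_algebra.
From mathcomp Require Import reals trigo.
From mathcomp Require Import complex.
Set Implicit Arguments.
Unset Strict Implicit.
Unset Printing Implicit Defensive.
Import Order.TTheory GRing.Theory Num.Theory.
Local Open Scope ring_scope.

Definition modI (L : nat) (z : int) : nat := `|(z %% (L%:Z))%Z|%N.

Definition omega (R : realType) (L : nat) : R[i] :=
  Complex (cos (2 * pi / L%:R)) (sin (2 * pi / L%:R)).

(* periodic cross-ambiguity function of sequences a, b of length L
   (sequences are functions nat -> C, only the entries 0..L-1 are used) *)
Definition AF (R : realType) (L : nat) (a b : nat -> R[i]) (tau v : int) : R[i] :=
  \sum_(t < L) a t * (b (modI L (t%:Z + tau)))^* * (omega R L) ^ (v * t%:Z).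

Definition aseq (R : realType) (K : nat) (f : nat -> nat) (k t : nat) : R[i] :=
  (omega R K) ^+ (t * f k).

(* s_i(tN + k) = h_i(k) a_k(t), 0 <= t < K, 0 <= k < N *)
Definition sseq (R : realType) (N K : nat) (f : nat -> nat)
  (h : nat -> nat -> R[i]) (i : nat) (m : nat) : R[i] :=
  h i (m %% N)%N * aseq R K f (m %% N)%N (m %/ N)%N.

From HB Require Import structures.
From mathcomp Require Import all_boot all_order all_algebra.
From mathcomp Require Import reals trigo.
From mathcomp Require Import complex.
From mathcomp Require Import zify ring lra.
Import Order.TTheory GRing.Theory Num.Theory.
Set Implicit Arguments.
Unset Strict Implicit.
Unset Printing Implicit Defensive.
Local Open Scope ring_scope.

(* Write the index of s_i as m = tN + k with 0 <= k < N.  The entry of s_j at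
   m + tau sits at k' = (k + tau) mod N with carry q = (k + tau) div N, so the
   (t, k) summand of AF(tau, v) is a unimodular coefficient depending only on k
   times omega_K^(t (f k - f k' + v)).  Summing this geometric series over t
   leaves K times the sum of the coefficients over those k with
   f k' - f k = v (mod K).  For tau <> 0 the hypothesis on f allows at most one
   such k; for tau = 0 there is none unless v = 0, and then AF is K times the
   plain correlation of h_i and h_j. *)

Lemma sum_ord_muln (V : nmodType) n k (F : nat -> V) :
  \sum_(m < n * k) F m = \sum_(t < k) \sum_(r < n) F (t * n + r)%N.
Proof.
rewrite mulnC -(big_mkord xpredT) big_nat_mul big_mkord; apply: eq_bigr => t _.
rewrite mulSn addnC -{1}[(t * n)%N]add0n big_addn addKn big_mkord.
by apply: eq_bigr => r _; rewrite addnC.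
Qed.

Section PrimitiveRootExprz.
Variables (F : fieldType) (n : nat) (z : F).
Hypothesis prim_z : n.-primitive_root z.

Lemma prim_root_neq0 : z != 0.
Proof. by rewrite (prim_root_eq0 prim_z) -lt0n (prim_order_gt0 prim_z). Qed.

Lemma prim_exprz_eq1 e : (z ^ e == 1) = (n %| e)%Z.
Proof.
have n_neq0 : n%:Z != 0 by rewrite eqz_nat -lt0n (prim_order_gt0 prim_z).
rewrite {1}(divz_eq e n) mulrC expfzDr ?prim_root_neq0 // -exprz_exp -exprnP.
rewrite (prim_expr_order prim_z) exp1rz mul1r.
rewrite -(gez0_abs (modz_ge0 e n_neq0)) -exprnP -(prim_order_dvd prim_z).
change ((n %| e %% n)%Z = (n %| e)%Z).
by apply/dvdz_mod0P/dvdz_mod0P; rewrite modz_mod.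
Qed.

Lemma eq_prim_root_exprz e1 e2 : (e1 == e2 %[mod n])%Z -> z ^ e1 = z ^ e2.
Proof.
rewrite eqz_mod_dvd -prim_exprz_eq1 => /eqP z1.
by rewrite -[e1](subrK e2) expfzDr ?prim_root_neq0 // z1 mul1r.
Qed.

Lemma sum_prim_exprz e :
  \sum_(t < n) (z ^ e) ^+ t = if (n %| e)%Z then n%:R else 0.
Proof.
have [n_dvd_e | n_ndvd_e] := ifPn.
  have /eqP -> : z ^ e == 1 by rewrite prim_exprz_eq1.
  by rewrite (eq_bigr (fun=> 1)) => [|t _]; rewrite ?expr1n // sumr_const card_ord.
have /eqP := subrX1 (z ^ e) n.
have /eqP -> : (z ^ e) ^+ n == 1 by rewrite exprnP exprz_exp prim_exprz_eq1 dvdz_mull.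
by rewrite subrr eq_sym mulf_eq0 subr_eq0 prim_exprz_eq1 (negbTE n_ndvd_e) => /eqP.
Qed.

End PrimitiveRootExprz.

Section UnimodularPrimitiveRoot.
Variables (C : numClosedFieldType) (n : nat) (z : C).
Hypothesis prim_z : n.-primitive_root z.

Lemma norm_prim_root : `|z| = 1.
Proof.
apply/eqP; rewrite -(pexpr_eq1 (prim_order_gt0 prim_z)) // -normrX.
by rewrite (prim_expr_order prim_z) normr1.
Qed.

Lemma norm_prim_exprz e : `|z ^ e| = 1.
Proof.
case: e => k; first by rewrite -exprnP normrX norm_prim_root expr1n.
by rewrite NegzE -exprnN normfV normrX norm_prim_root expr1n invr1.
Qed.

Lemma conjC_prim_exprz e : (z ^ e)^* = z ^ (- e).
Proof.
have conj_z : z^* = z^-1 by rewrite invC_norm norm_prim_root expr1n invr1 mul1r.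
have z_unit : z \is a GRing.unit by rewrite unitfE (prim_root_neq0 prim_z).
by rewrite (rmorphXz _ _ z_unit) /= conj_z exprz_inv.
Qed.

End UnimodularPrimitiveRoot.

Section Omega.
Variable R : realType.

Lemma de_moivre (x : R) k :
  (Complex (cos x) (sin x) : R[i]) ^+ k = Complex (cos (x *+ k)) (sin (x *+ k)).
Proof.
elim: k => [|k IHk]; first by rewrite expr0 mulr0n cos0 sin0.
by rewrite exprS IHk mulrS cosD sinD; congr Complex; ring.
Qed.

Lemma cos_mulr2n_lt1 (x : R) : 0 < x < pi -> cos (x *+ 2) < 1.
Proof.
move=> /sin_gt0_pi sin_gt0; have := mulr_gt0 sin_gt0 sin_gt0.
rewrite cos_mulr2n cos2sin2 -expr2; lra.
Qed.

Lemma omega_prim L : (0 < L)%N -> L.-primitive_root (omega R L).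
Proof.
move=> L_gt0; have L_neq0 : L%:R != 0 :> R by rewrite pnatr_eq0 -lt0n.
have omegaL : omega R L ^+ L = 1.
  by rewrite /omega de_moivre -[_ *+ L]mulr_natr divfK // mulr_natl cos2pi sin2pi.
have [m prim_m m_dvd_L] := prim_order_exists L_gt0 omegaL.
have m_gt0 := prim_order_gt0 prim_m.
suff m_eq_L : m = L by rewrite m_eq_L in prim_m.
apply/eqP; rewrite eqn_leq dvdn_leq //= leqNgt; apply/negP => m_lt_L.
have := prim_expr_order prim_m; rewrite /omega de_moivre => -[cos1 _].
have : 0 < (pi : R) * m%:R / L%:R < pi.
  rewrite !mulr_gt0 ?pi_gt0 ?ltr0n ?invr_gt0 ?ltr0n //=.
  by rewrite ltr_pdivrMr ?ltr0n // ltr_pM2l ?pi_gt0 // ltr_nat.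
move=> /cos_mulr2n_lt1; suff -> : ((pi : R) * m%:R / L%:R) *+ 2 = (2 * pi / L%:R) *+ m.
  by rewrite cos1 ltxx.
by rewrite -[_ *+ 2]mulr_natr -[_ *+ m]mulr_natr; field.
Qed.

Lemma omega_mulnX N K : (0 < N)%N -> (0 < K)%N ->
  omega R (N * K) ^+ N = omega R K.
Proof.
move=> N_gt0 K_gt0; rewrite /omega de_moivre -[_ *+ N]mulr_natr natrM.
by congr (Complex (cos _) (sin _)); field; rewrite !pnatr_eq0 -!lt0n N_gt0 K_gt0.
Qed.

End Omega.

Lemma modIE L m : (0 < L)%N -> (modI L m)%:Z = (m %% L)%Z.
Proof. by move=> L_gt0; rewrite /modI gez0_abs // modz_ge0 // eqz_nat -lt0n. Qed.

Lemma modI_lt L m : (0 < L)%N -> (modI L m < L)%N.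
Proof.
move=> L_gt0; rewrite -ltz_nat modIE //.
have L_neq0 : L%:Z != 0 by rewrite eqz_nat -lt0n.
by have := ltz_mod m L_neq0.
Qed.

Lemma dvdz_small_eq0 (d : nat) (v : int) : (`|v| < d)%N -> (d %| v)%Z = (v == 0).
Proof.
move=> v_lt_d; have [->|v_neq0] := eqVneq v 0; first exact: dvdz0.
apply/negbTE; rewrite dvdzE absz_nat; apply: contraTN v_lt_d => /dvdn_leq.
by rewrite absz_gt0 v_neq0 -leqNgt => /(_ isT).
Qed.

Section LAZ.
Variables (R : realType) (N K : nat) (f : nat -> nat) (h : nat -> nat -> R[i]).
Hypotheses (N_gt0 : (0 < N)%N) (K_gt0 : (0 < K)%N).

Local Notation s := (sseq N K f h).
Local Notation w := (omega R (N * K)).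
Local Notation wK := (omega R K).

Let primK : K.-primitive_root wK := omega_prim R K_gt0.
Let NK_gt0 : (0 < N * K)%N. Proof. by rewrite muln_gt0 N_gt0. Qed.
Let primNK : (N * K).-primitive_root w := omega_prim R NK_gt0.

Lemma sseq_mulnDr i t k : (k < N)%N ->
  s i (t * N + k) = h i k * wK ^ (t%:Z * (f k)%:Z).
Proof.
move=> k_lt_N; rewrite /sseq /aseq modnMDl modn_small // divnMDl // divn_small //.
by rewrite addn0 exprnP PoszM.
Qed.

Lemma sseq_modI j m :
  s j (modI (N * K) m) = h j (modI N m) * wK ^ ((m %/ N)%Z * (f (modI N m))%:Z).
Proof.
have N_neq0 : N%:Z != 0 by rewrite eqz_nat -lt0n.
set r := modI (N * K) m.
have m_eq : m = ((m %/ (N * K)%N)%Z * K%:Z + (r %/ N)%N%:Z) * N%:Z + (r %% N)%N%:Z.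
  rewrite {1}(divz_eq m (N * K)%N) -modIE ?muln_gt0 ?N_gt0 // -/r {1}(divn_eq r N).
  by rewrite PoszD !PoszM; ring.
set q := (m %/ (N * K)%N)%Z in m_eq.
have r_mod_N : (r %% N)%N%:Z < N%:Z by rewrite ltz_nat ltn_mod.
have r_modI : modI N m = (r %% N)%N.
  by apply/eqP; rewrite -eqz_nat modIE // m_eq modzMDl modz_small ?r_mod_N.
rewrite /sseq /aseq r_modI exprnP PoszM; congr (_ * _).
apply: (eq_prim_root_exprz primK); rewrite [in (m %/ N)%Z]m_eq divzMDl // divz_small.
  by rewrite addr0 mulrDl eq_sym eqz_mod_dvd addrK mulrAC dvdz_mull // dvdzz.
by rewrite r_mod_N andbT.
Qed.

Definition shift_index (tau : int) (k : nat) : nat := modI N (k%:Z + tau).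
Definition carry (tau : int) (k : nat) : int := ((k%:Z + tau) %/ N)%Z.

Definition collision (tau v : int) (k : nat) : bool :=
  ((f (shift_index tau k))%:Z - (f k)%:Z == v %[mod K])%Z.

Definition AF_coef (i j : nat) (tau v : int) (k : nat) : R[i] :=
  h i k * (h j (shift_index tau k))^* * w ^ (v * k%:Z) *
  wK ^ (- (carry tau k * (f (shift_index tau k))%:Z)).

Lemma AF_sseqE i j tau v : AF (N * K) (s i) (s j) tau v =
  K%:R * \sum_(k < N | collision tau v k) AF_coef i j tau v k.
Proof.
rewrite /AF (sum_ord_muln _ _ (fun m =>
  s i m * (s j (modI (N * K) (m%:Z + tau)))^* * w ^ (v * m%:Z))).
rewrite exchange_big mulr_sumr [RHS]big_mkcond /=; apply: eq_bigr => k _.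
set k' := shift_index tau k.
set d := (f k')%:Z - (f k)%:Z - v.
suff term t : s i (t * N + k) * (s j (modI (N * K) ((t * N + k)%N%:Z + tau)))^* *
    w ^ (v * (t * N + k)%N%:Z) = AF_coef i j tau v k * (wK ^ (- d)) ^+ t.
  under eq_bigr do rewrite term.
  rewrite -mulr_sumr sum_prim_exprz // rpredN.
  by rewrite -eqz_mod_dvd -/(collision tau v k); case: ifP; rewrite ?mulr0 // mulrC.
have shiftE : (t * N + k)%N%:Z + tau = t%:Z * N%:Z + (k%:Z + tau).
  by rewrite PoszD PoszM addrA.
have idxE : modI N ((t * N + k)%N%:Z + tau) = k' by rewrite /k' /modI shiftE modzMDl.
have divE : (((t * N + k)%N%:Z + tau) %/ N)%Z = t%:Z + carry tau k.
  by rewrite shiftE divzMDl // eqz_nat -lt0n.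
have wE : w ^ (v * (t * N + k)%N%:Z) = w ^ (v * k%:Z) * wK ^ (v * t%:Z).
  rewrite -(omega_mulnX R N_gt0 K_gt0) exprnP exprz_exp.
  rewrite -expfzDr ?(prim_root_neq0 primNK) //.
  by congr (_ ^ _); rewrite PoszD PoszM; ring.
have wKE : wK ^ (t%:Z * (f k)%:Z) * wK ^ (- ((t%:Z + carry tau k) * (f k')%:Z)) *
    wK ^ (v * t%:Z) = wK ^ (- (carry tau k * (f k')%:Z)) * (wK ^ (- d)) ^+ t.
  rewrite exprnP exprz_exp -!expfzDr ?(prim_root_neq0 primK) //.
  by congr (_ ^ _); rewrite /d; ring.
rewrite (sseq_mulnDr i t (ltn_ord k)) (sseq_modI j ((t * N + k)%N%:Z + tau)).
rewrite idxE divE wE.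
rewrite rmorphM /= (conjC_prim_exprz primK).
rewrite /AF_coef -/k' -[RHS]mulrA -wKE.
by rewrite [h i k * _ * _]mulrACA [_ * (w ^ _ * _)]mulrACA.
Qed.

Lemma norm_AF_coef i j tau v k :
  (forall i n, (i < N)%N -> (n < N)%N -> `|h i n| = 1) ->
  (i < N)%N -> (j < N)%N -> (k < N)%N -> `|AF_coef i j tau v k| = 1.
Proof.
move=> unimodular i_lt_N j_lt_N k_lt_N.
rewrite /AF_coef !normrM norm_conjC !unimodular ?modI_lt //.
by rewrite (norm_prim_exprz primNK) (norm_prim_exprz primK) !mul1r.
Qed.

Lemma norm_AF_sseq_le i j tau v :
  (forall i n, (i < N)%N -> (n < N)%N -> `|h i n| = 1) ->
  (i < N)%N -> (j < N)%N ->
  (forall k1 k2, (k1 < N)%N -> (k2 < N)%N ->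
     collision tau v k1 -> collision tau v k2 -> k1 = k2) ->
  `|AF (N * K) (s i) (s j) tau v| <= K%:R.
Proof.
move=> unimodular i_lt_N j_lt_N collision_uniq.
rewrite AF_sseqE normrM normr_nat -[leRHS]mulr1 ler_wpM2l ?ler0n //.
apply: le_trans (ler_norm_sum _ _ _) _.
rewrite (eq_bigr (fun=> 1)) => [|k _]; last exact: norm_AF_coef.
rewrite sumr_const lern1.
apply/card_le1_eqP => k1 k2 coll1 coll2; apply/val_inj.
exact: collision_uniq coll2 coll1.
Qed.

Lemma shift_index0 k : (k < N)%N -> shift_index 0 k = k.
Proof. by move=> k_lt_N; rewrite /shift_index /modI addr0 modz_small. Qed.

Lemma collision0 v k : (k < N)%N -> collision 0 v k = (K %| v)%Z.
Proof.
by move=> k_lt_N; rewrite /collision shift_index0 // subrr eq_sym eqz_mod_dvd subr0.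
Qed.

Lemma AF_sseq_shift0 i j v : ~~ (K %| v)%Z -> AF (N * K) (s i) (s j) 0 v = 0.
Proof.
move=> K_ndvd_v; rewrite AF_sseqE big1 ?mulr0 // => k.
by rewrite collision0 // (negbTE K_ndvd_v).
Qed.

Lemma AF_sseq00 i j :
  AF (N * K) (s i) (s j) 0 0 = K%:R * \sum_(n < N) h i n * (h j n)^*.
Proof.
rewrite AF_sseqE; congr (_ * _); apply: eq_big => k; first by rewrite collision0 // dvdz0.
move=> _; rewrite /AF_coef /carry shift_index0 // addr0 divz_small; last first.
  by rewrite ltz_nat ltn_ord.
by rewrite mul0r oppr0 !expr0z !mulr1.
Qed.

End LAZ.

Theorem theorem1 (R : realType) (N K Zx Zy : nat) (f : nat -> nat)
  (h : nat -> nat -> R[i])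
  (HNodd : odd N) (HN2 : (2 < N)%N) (HK : (0 < K)%N)
  (HZx : (0 < Zx <= N)%N) (HZy : (0 < Zy <= K)%N)
  (Hfrange : forall k, (k < N)%N -> (f k < K)%N)
  (Hf : forall a b : int,
      - Zx%:Z < a < Zx%:Z -> a != 0 -> - Zy%:Z < b < Zy%:Z ->
      forall x1 x2 : nat, (x1 < N)%N -> (x2 < N)%N ->
      ((f (modI N (x1%:Z + a)))%:Z - (f x1)%:Z == b %[mod K%:Z])%Z ->
      ((f (modI N (x2%:Z + a)))%:Z - (f x2)%:Z == b %[mod K%:Z])%Z ->
      x1 = x2)
  (Hunimod : forall i n, (i < N)%N -> (n < N)%N -> `|h i n| = 1)
  (Hcorr : forall i j, (i < N)%N -> (j < N)%N -> i != j ->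
      `|\sum_(n < N) h i n * (h j n)^*| <= 1)
  (Hcorrv : forall i j v, (i < N)%N -> (j < N)%N -> i != j -> (v < N)%N ->
      `|\sum_(n < N) h i n * (h j n)^* * (omega R N) ^+ (n * v)| < N%:R) :
  forall tau v : int, - Zx%:Z < tau < Zx%:Z -> - Zy%:Z < v < Zy%:Z ->
    (forall i, (i < N)%N -> (tau, v) != (0, 0) ->
       `|AF (N * K)%N (sseq N K f h i) (sseq N K f h i) tau v| <= K%:R)
    /\
    (forall i j, (i < N)%N -> (j < N)%N -> i != j ->
       `|AF (N * K)%N (sseq N K f h i) (sseq N K f h j) tau v| <= K%:R).
Proof.
move=> tau v /andP[tau_gt tau_lt] /andP[v_gt v_lt].
have N_gt0 : (0 < N)%N by apply: ltn_trans HN2.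
have v_ndvd : v != 0 -> ~~ (K %| v)%Z.
  by move=> v_neq0; rewrite dvdz_small_eq0 ?v_neq0 //; lia.
have AF_le_shift : tau != 0 -> forall i j, (i < N)%N -> (j < N)%N ->
    `|AF (N * K) (sseq N K f h i) (sseq N K f h j) tau v| <= K%:R.
  move=> tau_neq0 i j i_lt_N j_lt_N; apply: norm_AF_sseq_le => // k1 k2.
  by apply: Hf; rewrite ?tau_gt ?tau_lt ?v_gt ?v_lt.
split=> [i i_lt_N | i j i_lt_N j_lt_N i_neq_j];
  have [tau0|/AF_le_shift -> //] := eqVneq tau 0; rewrite tau0.
  by rewrite xpair_eqE eqxx => /v_ndvd/AF_sseq_shift0 ->; rewrite ?normr0.
have [v0|/v_ndvd/AF_sseq_shift0 -> //] := eqVneq v 0; last by rewrite normr0.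
rewrite v0 AF_sseq00 // normrM normr_nat -[leRHS]mulr1 ler_wpM2l ?ler0n //.
exact: Hcorr.
Qed.
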